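(* The Nielsen–Schreier theorem — ''for every set $A$ and every subgroup $H$ of the free group $F_A$ on $A$, there exists a subset of $H$ that freely generates $H$'' — is false in the internal logic of the topos of nominal sets.
   Context: Work in a classical metatheory. Fix a countably infinite set $\mathbb{A}$ and let $\mathrm{Perm}(\mathbb{A})$ be the group of finitely supported permutations of $\mathbb{A}$ (bijections $\pi$ with $\pi(a)=a$ for all but finitely many $a$). For a $\mathrm{Perm}(\mathbb{A})$-set $(X,\cdot)$, a subset $S\subseteq\mathbb{A}$ supports $x\in X$ if $\pi\cdot x = x$ for every $\pi$ fixing all elements of $S$. The topos of nominal sets is the full subcategory of $\mathrm{Perm}(\mathbb{A})$-sets in which every element has a finite support. Free groups are understood in the usual sense (reduced words); a subset freely generates a group if the induced homomorphism from the free group on that subset is an isomorphism. *)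

(* Nominal sets over the countably infinite set of atoms nat. *)
From Stdlib Require Import List Relations.
Import ListNotations.
Set Implicit Arguments.

Record finperm := FinPerm {
  fwd : nat -> nat;
  bwd : nat -> nat;
  fwd_bwd : forall a, fwd (bwd a) = a;
  bwd_fwd : forall a, bwd (fwd a) = a;
  fperm_fin : exists l : list nat, forall a, ~ In a l -> fwd a = a
}.

Definition finperm_inv (p : finperm) : finperm.
Proof.
  refine (@FinPerm (bwd p) (fwd p) (bwd_fwd p) (fwd_bwd p) _).
  destruct (fperm_fin p) as [l Hl]; exists l; intros a Ha.
  rewrite <- (Hl a Ha) at 1. apply bwd_fwd.
Defined.

Definition fixes (p : finperm) (l : list nat) : Prop :=
  forall a, In a l -> fwd p a = a.

Record nominal := Nominal {
  carrier :> Type;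
  act : finperm -> carrier -> carrier;
  act_id : forall p x, (forall a, fwd p a = a) -> act p x = x;
  act_comp : forall p q r x, (forall a, fwd r a = fwd p (fwd q a)) ->
     act r x = act p (act q x);
  act_fin_supp : forall x : carrier, exists l : list nat,
     forall p, fixes p l -> act p x = x
}.

(** Words over letters (x, b): b = true is the generator x, b = false is x^-1. *)
Definition word (L : Type) := list (L * bool).

Inductive red1 {L : Type} : word L -> word L -> Prop :=
| red1_intro : forall l1 l2 x b,
    red1 (l1 ++ (x, b) :: (x, negb b) :: l2) (l1 ++ l2).

Definition fequiv {L : Type} : word L -> word L -> Prop :=
  clos_refl_sym_trans (word L) red1.

Definition reduced {L : Type} (w : word L) : Prop :=
  forall (l1 l2 : word L) (x : L) (b : bool), w <> l1 ++ (x, b) :: (x, negb b) :: l2.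

Definition winv {L : Type} (w : word L) : word L :=
  rev (map (fun p => (fst p, negb (snd p))) w).

(** Elements of the free group F_X are the reduced words; F_X is a nominal set
    under the pointwise action on letters. *)
Definition word_act (X : nominal) (p : finperm) (w : word X) : word X :=
  map (fun l => (act X p (fst l), snd l)) w.

(** Subsets of F_X (predicates on words); action on subsets and finite support
    (internal subsets = finitely supported subsets). *)
Definition set_act (X : nominal) (p : finperm) (P : word X -> Prop) : word X -> Prop :=
  fun w => P (word_act X (finperm_inv p) w).

Definition fin_supported_set (X : nominal) (P : word X -> Prop) : Prop :=
  exists l : list nat, forall p, fixes p l -> forall w, set_act X p P w <-> P w.

Definition is_subgroup {L : Type} (H : word L -> Prop) : Prop :=
  (forall w, H w -> reduced w) /\
  H [] /\
  (forall u v w, H u -> H v -> reduced w -> fequiv (u ++ v) w -> H w) /\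
  (forall u, H u -> H (winv u)).

(** The homomorphism F_S -> F_X induced by a subset S of F_X, on words over S
    (before reduction). *)
Definition geval {L : Type} (ws : word (word L)) : word L :=
  concat (map (fun p : word L * bool => if snd p then fst p else winv (fst p)) ws).

Definition over {L : Type} (S : word L -> Prop) (ws : word (word L)) : Prop :=
  Forall (fun p : word L * bool => S (fst p)) ws.

(** S freely generates H: S ⊆ H and the induced homomorphism F_S -> H is an
    isomorphism (bijective). *)
Definition freely_generates {L : Type} (S H : word L -> Prop) : Prop :=
  (forall s, S s -> H s) /\
  (forall h, H h -> exists ws, over S ws /\ reduced ws /\ fequiv (geval ws) h) /\
  (forall ws1 ws2, over S ws1 -> over S ws2 -> reduced ws1 -> reduced ws2 ->
     fequiv (geval ws1) (geval ws2) -> ws1 = ws2).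

Definition internal_nielsen_schreier : Prop :=
  forall (A : nominal) (H : word A -> Prop),
    fin_supported_set A H -> is_subgroup H ->
    exists S : word A -> Prop,
      fin_supported_set A S /\ (forall s, S s -> H s) /\ freely_generates S H.

(* The commutator subgroup H of F_A, made of the reduced words whose exponent sum
   in every atom is 0, is equivariant, hence an internal subgroup. Suppose a finitely
   supported B freely generated H and take atoms a <> b outside a support of B. The
   transposition tau = (a b) maps B into itself and the commutator [a,b] to its inverse
   [b,a]; by uniqueness of reduced B-words, the B-word w of [a,b] satisfies
   tau(w) = w^-1, so the letters of w pair off as s^e and (tau s)^-e. The signed count
   [link a b] of occurrences of a before occurrences of b is additive on H and takes
   the same value on both letters of each pair, so [link a b [a,b]] would be even;
   but it is 1. *)

From Stdlib Require Import List Relations ZArith Lia Bool FinFun.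
Import ListNotations.
Set Implicit Arguments.
Open Scope Z_scope.

Definition rename (L M : Type) (f : L -> M) (w : word L) : word M :=
  map (fun l => (f (fst l), snd l)) w.

Definition geval_letter (L : Type) (p : word L * bool) : word L :=
  if snd p then fst p else winv (fst p).

Lemma list_ind_ends (A : Type) (P : list A -> Prop) :
  P [] -> (forall x, P [x]) -> (forall x m y, P m -> P (x :: m ++ [y])) ->
  forall l, P l.
Proof.
  intros Hnil Hone Hends.
  enough (H : forall n l, (length l <= n)%nat -> P l) by (intros l; exact (H _ l (le_n _))).
  induction n as [|n IH]; intros [|x l] Hlen; auto; [simpl in Hlen; lia|].
  destruct l as [|z l]; auto.
  destruct (exists_last (l := z :: l) ltac:(discriminate)) as [m [y Hzl]].
  rewrite Hzl in *. apply Hends, IH. rewrite length_cons, length_app in Hlen. simpl in Hlen. lia.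
Qed.

Lemma fequiv_map (L M : Type) (phi : word L -> word M) :
  (forall u v, red1 u v -> red1 (phi u) (phi v)) ->
  forall u v, fequiv u v -> fequiv (phi u) (phi v).
Proof.
  intros Hphi u v Huv. induction Huv.
  - apply rst_step, Hphi; assumption.
  - apply rst_refl.
  - apply rst_sym; assumption.
  - eapply rst_trans; eassumption.
Qed.

Lemma fequiv_invariant (L T : Type) (phi : word L -> T) :
  (forall u v, red1 u v -> phi u = phi v) ->
  forall u v, fequiv u v -> phi u = phi v.
Proof.
  intros Hphi u v Huv. induction Huv; auto. congruence.
Qed.

Lemma winv_cons (L : Type) (p : L * bool) (w : word L) :
  winv (p :: w) = winv w ++ [(fst p, negb (snd p))].
Proof. reflexivity. Qed.

Lemma winv_app (L : Type) (u v : word L) : winv (u ++ v) = winv v ++ winv u.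
Proof. unfold winv. rewrite map_app, rev_app_distr. reflexivity. Qed.

Lemma winv_involutive (L : Type) (w : word L) : winv (winv w) = w.
Proof.
  induction w as [|[z e] w IH]; [reflexivity|].
  rewrite winv_cons, winv_app, IH. simpl. rewrite negb_involutive. reflexivity.
Qed.

Lemma rename_cons (L M : Type) (f : L -> M) (p : L * bool) (w : word L) :
  rename f (p :: w) = (f (fst p), snd p) :: rename f w.
Proof. reflexivity. Qed.

Lemma rename_app (L M : Type) (f : L -> M) (u v : word L) :
  rename f (u ++ v) = rename f u ++ rename f v.
Proof. apply map_app. Qed.

Lemma rename_winv (L M : Type) (f : L -> M) (w : word L) : rename f (winv w) = winv (rename f w).
Proof. unfold rename, winv. rewrite map_rev, !map_map. reflexivity. Qed.

Lemma rename_injective (L M : Type) (f : L -> M) : Injective f -> Injective (rename f).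
Proof.
  intros Hf u. induction u as [|[x e] u IH]; intros [|[y e'] v] Huv; try discriminate; auto.
  injection Huv as Hxy Hee Huv. rewrite (Hf _ _ Hxy), Hee, (IH _ Huv). reflexivity.
Qed.

Lemma reduced_nil (L : Type) : reduced (@nil (L * bool)).
Proof. intros [|] l2 x e H; discriminate. Qed.

Lemma reduced_winv (L : Type) (w : word L) : reduced w -> reduced (winv w).
Proof.
  intros Hr l1 l2 x e Heq. apply (Hr (winv l2) (winv l1) x e).
  rewrite <- (winv_involutive w), Heq, winv_app, !winv_cons. simpl.
  rewrite negb_involutive, <- !app_assoc. reflexivity.
Qed.

Lemma reduced_rename (L M : Type) (f : L -> M) (w : word L) :
  Injective f -> reduced w -> reduced (rename f w).
Proof.
  intros Hf Hr l1 l2 x e Heq.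
  apply map_eq_app in Heq as [w1 [w2 [-> [_ H2]]]].
  apply map_eq_cons in H2 as [[z1 c1] [w3 [-> [Hy1 H3]]]].
  apply map_eq_cons in H3 as [[z2 c2] [w4 [-> [Hy2 _]]]].
  injection Hy1 as Hz1 ->. injection Hy2 as Hz2 ->.
  rewrite <- Hz2 in Hz1. rewrite (Hf _ _ Hz1) in *. exact (Hr w1 w4 z2 e eq_refl).
Qed.

Lemma reduced_rename_inv (L M : Type) (f : L -> M) (w : word L) :
  reduced (rename f w) -> reduced w.
Proof.
  intros Hr l1 l2 x e ->. apply (Hr (rename f l1) (rename f l2) (f x) e).
  rewrite rename_app. reflexivity.
Qed.

Lemma fequiv_rename (L M : Type) (f : L -> M) (u v : word L) :
  fequiv u v -> fequiv (rename f u) (rename f v).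
Proof.
  apply fequiv_map. intros ? ? []. rewrite !rename_app. constructor.
Qed.

Lemma fequiv_winv (L : Type) (u v : word L) : fequiv u v -> fequiv (winv u) (winv v).
Proof.
  apply fequiv_map. intros ? ? []. rewrite !winv_app, !winv_cons. simpl.
  rewrite negb_involutive, <- !app_assoc. constructor.
Qed.

Lemma geval_cons (L : Type) (p : word L * bool) (ws : word (word L)) :
  geval (p :: ws) = geval_letter p ++ geval ws.
Proof. reflexivity. Qed.

Lemma geval_app (L : Type) (us vs : word (word L)) : geval (us ++ vs) = geval us ++ geval vs.
Proof. unfold geval. rewrite map_app, concat_app. reflexivity. Qed.

Lemma geval_rename (L M : Type) (f : L -> M) (ws : word (word L)) :
  geval (rename (rename f) ws) = rename f (geval ws).
Proof.
  induction ws as [|[s e] ws IH]; [reflexivity|].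
  change (rename (rename f) ((s, e) :: ws)) with ((rename f s, e) :: rename (rename f) ws).
  rewrite !geval_cons, IH, rename_app.
  destruct e; cbn [geval_letter fst snd]; rewrite ?rename_winv; reflexivity.
Qed.

Lemma geval_winv (L : Type) (ws : word (word L)) : geval (winv ws) = winv (geval ws).
Proof.
  induction ws as [|[s e] ws IH]; [reflexivity|].
  rewrite winv_cons, geval_app, IH, !geval_cons, winv_app, app_nil_r.
  destruct e; cbn [geval_letter fst snd negb]; rewrite ?winv_involutive; reflexivity.
Qed.

Lemma over_rename (L M : Type) (f : L -> M) {T : word L -> Prop} {S : word M -> Prop} ws :
  (forall s, T s -> S (rename f s)) -> over T ws -> over S (rename (rename f) ws).
Proof. intros HTS Hws. apply Forall_map. exact (Forall_impl _ (fun p => HTS (fst p)) Hws). Qed.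

Lemma over_winv (L : Type) (S : word L -> Prop) ws : over S ws -> over S (winv ws).
Proof. intros Hws. apply Forall_rev, Forall_map. exact Hws. Qed.

Lemma geval_letter_rename_flip (L M : Type) (f : L -> M) (s : word L) (e : bool) :
  geval_letter (rename f s, negb e) = winv (rename f (geval_letter (s, e))).
Proof.
  destruct e; cbn [geval_letter fst snd negb]; rewrite ?rename_winv, ?winv_involutive; reflexivity.
Qed.

Lemma rename_eq_winv_single (L : Type) (f : L -> L) (p : word L * bool) :
  rename (rename f) [p] <> winv [p].
Proof. destruct p as [s []]; discriminate. Qed.

Lemma rename_eq_winv_ends (L : Type) (f : L -> L) p m q :
  rename (rename f) (p :: m ++ [q]) = winv (p :: m ++ [q]) ->
  q = (rename f (fst p), negb (snd p)) /\ rename (rename f) m = winv m.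
Proof.
  destruct p as [s e], q as [t e']. intros Heq.
  rewrite rename_cons, rename_app, winv_cons, winv_app in Heq. cbn [app fst snd] in Heq.
  injection Heq as Hts Hee Hm. apply app_inj_tail in Hm as [Hm _].
  subst. cbn [fst snd]. rewrite negb_involutive. auto.
Qed.

Lemma free_basis_word_rename_winv (L : Type) (S H : word L -> Prop) (f : L -> L) ws g :
  Injective f -> freely_generates S H -> (forall s, S s -> S (rename f s)) ->
  over S ws -> reduced ws -> fequiv (geval ws) g -> fequiv (rename f g) (winv g) ->
  rename (rename f) ws = winv ws.
Proof.
  intros Hf [_ [_ Hinj]] HSf Hws Hred Hg Hfg. apply Hinj.
  - exact (over_rename f HSf Hws).
  - exact (over_winv Hws).
  - exact (reduced_rename (rename_injective Hf) Hred).
  - exact (reduced_winv Hred).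
  - rewrite geval_rename, geval_winv.
    apply rst_trans with (rename f g); [exact (fequiv_rename f Hg)|].
    apply rst_trans with (winv g); [exact Hfg|].
    apply fequiv_winv, rst_sym, Hg.
Qed.

Definition commutator (L : Type) (a b : L) : word L :=
  [(a, true); (b, true); (a, false); (b, false)].

Lemma rename_commutator (L M : Type) (f : L -> M) a b :
  rename f (commutator a b) = commutator (f a) (f b).
Proof. reflexivity. Qed.

Lemma winv_commutator (L : Type) (a b : L) : winv (commutator a b) = commutator b a.
Proof. reflexivity. Qed.

Lemma reduced_commutator (L : Type) (a b : L) : a <> b -> reduced (commutator a b).
Proof.
  intros Hab l1 l2 x e H.
  destruct l1 as [|p1 [|p2 [|p3 [|p4 l1]]]]; cbn in H; injection H; intros; subst;
    try congruence; destruct l1; discriminate.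
Qed.

Section ExponentSums.

Variables (L : Type) (eq_dec : forall x y : L, {x = y} + {x <> y}).

Definition sgn (b : bool) : Z := if b then 1 else -1.

Fixpoint exp_sum (x : L) (w : word L) : Z :=
  match w with
  | [] => 0
  | (z, e) :: w' => (if eq_dec z x then sgn e else 0) + exp_sum x w'
  end.

Fixpoint link (x y : L) (w : word L) : Z :=
  match w with
  | [] => 0
  | (z, e) :: w' => (if eq_dec z x then sgn e * exp_sum y w' else 0) + link x y w'
  end.

Local Ltac simpl_counts := cbn [exp_sum link sgn negb fst snd app].

Lemma exp_sum_app x u v : exp_sum x (u ++ v) = exp_sum x u + exp_sum x v.
Proof. induction u as [|[z e] u IH]; simpl_counts; lia. Qed.

Lemma exp_sum_winv x w : exp_sum x (winv w) = - exp_sum x w.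
Proof.
  induction w as [|[z e] w IH]; [reflexivity|].
  rewrite winv_cons, exp_sum_app, IH. cbn [exp_sum sgn negb fst snd].
  destruct (eq_dec z x), e; cbn [sgn negb]; lia.
Qed.

Lemma exp_sum_fequiv x u v : fequiv u v -> exp_sum x u = exp_sum x v.
Proof.
  apply fequiv_invariant. intros ? ? [l1 l2 z e]. rewrite !exp_sum_app. simpl_counts.
  destruct (eq_dec z x), e; simpl_counts; lia.
Qed.

Lemma exp_sum_rename (f : L -> L) x w :
  Injective f -> exp_sum (f x) (rename f w) = exp_sum x w.
Proof.
  intros Hf. induction w as [|[z e] w IH]; [reflexivity|].
  rewrite rename_cons. cbn [exp_sum fst snd]. rewrite IH.
  destruct (eq_dec (f z) (f x)) as [Hzx|Hzx], (eq_dec z x); subst; try reflexivity.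
  - apply Hf in Hzx. contradiction.
  - contradiction.
Qed.

Lemma link_app x y u v :
  link x y (u ++ v) = link x y u + link x y v + exp_sum x u * exp_sum y v.
Proof.
  induction u as [|[z e] u IH]; simpl_counts; [lia|].
  rewrite IH, exp_sum_app. destruct (eq_dec z x); lia.
Qed.

Lemma link_fequiv x y u v : x <> y -> fequiv u v -> link x y u = link x y v.
Proof.
  intros Hxy. apply fequiv_invariant. intros ? ? [l1 l2 z e]. rewrite !link_app.
  replace (exp_sum y ((z, e) :: (z, negb e) :: l2)) with (exp_sum y l2)
    by (simpl_counts; destruct (eq_dec z y), e; simpl_counts; lia).
  simpl_counts. destruct (eq_dec z x), (eq_dec z y); subst; try contradiction; destruct e; simpl_counts; lia.
Qed.

Lemma link_winv x y w :
  x <> y -> link x y (winv w) = - link x y w + exp_sum x w * exp_sum y w.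
Proof.
  intros Hxy. induction w as [|[z e] w IH]; [reflexivity|].
  rewrite winv_cons, link_app, IH, exp_sum_winv. simpl_counts.
  destruct (eq_dec z x), (eq_dec z y); subst; try contradiction; destruct e; simpl_counts; lia.
Qed.

Lemma link_swap_args x y w :
  x <> y -> link x y w + link y x w = exp_sum x w * exp_sum y w.
Proof.
  intros Hxy. induction w as [|[z e] w IH]; [reflexivity|]. simpl_counts.
  destruct (eq_dec z x), (eq_dec z y); subst; try contradiction; destruct e; simpl_counts; nia.
Qed.

Lemma link_rename (f : L -> L) x y w :
  Injective f -> link (f x) (f y) (rename f w) = link x y w.
Proof.
  intros Hf. induction w as [|[z e] w IH]; [reflexivity|].
  rewrite rename_cons. cbn [link fst snd]. rewrite IH, exp_sum_rename by exact Hf.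
  destruct (eq_dec (f z) (f x)) as [Hzx|Hzx], (eq_dec z x); subst; try reflexivity.
  - apply Hf in Hzx. contradiction.
  - contradiction.
Qed.

Lemma exp_sum_geval_letter x s e : exp_sum x (geval_letter (s, e)) = sgn e * exp_sum x s.
Proof. destruct e; cbn [geval_letter fst snd sgn]; rewrite ?exp_sum_winv; lia. Qed.

Lemma exp_sum_geval (S : word L -> Prop) x ws :
  (forall s, S s -> exp_sum x s = 0) -> over S ws -> exp_sum x (geval ws) = 0.
Proof.
  intros HS Hws. induction Hws as [|[s e] ws Hs _ IH]; [reflexivity|].
  rewrite geval_cons, exp_sum_app, exp_sum_geval_letter, IH, HS by exact Hs. lia.
Qed.

Lemma link_app_balanced x y u v :
  exp_sum x u = 0 -> link x y (u ++ v) = link x y u + link x y v.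
Proof. intros Hu. rewrite link_app, Hu. lia. Qed.

Lemma exp_sum_commutator a b x : exp_sum x (commutator a b) = 0.
Proof. unfold commutator. simpl_counts. destruct (eq_dec a x), (eq_dec b x); simpl_counts; lia. Qed.

Lemma link_commutator a b : a <> b -> link a b (commutator a b) = 1.
Proof.
  intros Hab. unfold commutator. simpl_counts.
  destruct (eq_dec a a), (eq_dec b a), (eq_dec b b), (eq_dec a b); subst; try contradiction.
  reflexivity.
Qed.

Definition swap (a b z : L) : L :=
  if eq_dec z a then b else if eq_dec z b then a else z.

Lemma swap_l a b : swap a b a = b.
Proof. unfold swap. destruct (eq_dec a a); [reflexivity | contradiction]. Qed.

Lemma swap_r a b : swap a b b = a.
Proof. unfold swap. destruct (eq_dec b a), (eq_dec b b); congruence. Qed.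

Lemma swap_involutive a b z : swap a b (swap a b z) = z.
Proof.
  unfold swap at 2. destruct (eq_dec z a), (eq_dec z b); subst;
    rewrite ?swap_l, ?swap_r; try reflexivity.
  unfold swap. destruct (eq_dec z a), (eq_dec z b); congruence.
Qed.

Lemma swap_injective a b : Injective (swap a b).
Proof. intros x y Hxy. rewrite <- (swap_involutive a b x), Hxy. apply swap_involutive. Qed.

Section SwapSymmetricWords.

Variables (a b : L) (S : word L -> Prop).
Hypothesis a_neq_b : a <> b.
Hypothesis S_balanced : forall s, S s -> exp_sum a s = 0 /\ exp_sum b s = 0.

(* Renaming by the transposition and inverting each negate [link a b] on balanced words. *)
Lemma link_winv_rename_swap u :
  exp_sum a u = 0 -> exp_sum b u = 0 ->
  link a b (winv (rename (swap a b) u)) = link a b u.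
Proof.
  intros Ha Hb.
  pose proof (link_rename b a u (swap_injective a b)) as Hlink.
  pose proof (exp_sum_rename a u (swap_injective a b)) as Hexpa.
  pose proof (exp_sum_rename b u (swap_injective a b)) as Hexpb.
  rewrite swap_l, swap_r in Hlink. rewrite swap_l in Hexpa. rewrite swap_r in Hexpb.
  rewrite link_winv, Hlink, Hexpa, Hexpb by exact a_neq_b.
  pose proof (link_swap_args u a_neq_b). rewrite Ha, Hb in *. lia.
Qed.

Lemma link_even_of_swap_symmetric ws :
  over S ws -> rename (rename (swap a b)) ws = winv ws -> Z.Even (link a b (geval ws)).
Proof.
  induction ws as [|p|p m q IH] using list_ind_ends; intros Hws Hsym.
  - exists 0. reflexivity.
  - contradiction (rename_eq_winv_single Hsym).
  - apply rename_eq_winv_ends in Hsym as [-> Hsym].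
    apply Forall_cons_iff in Hws as [Hp Hws]. apply Forall_app in Hws as [Hm _].
    destruct p as [s e]. cbn [fst snd] in *.
    destruct (S_balanced Hp) as [Hsa Hsb].
    destruct (IH Hm Hsym) as [k Hk].
    assert (Hlet_a : exp_sum a (geval_letter (s, e)) = 0)
      by (rewrite exp_sum_geval_letter, Hsa; lia).
    assert (Hlet_b : exp_sum b (geval_letter (s, e)) = 0)
      by (rewrite exp_sum_geval_letter, Hsb; lia).
    assert (Hgm : exp_sum a (geval m) = 0)
      by exact (exp_sum_geval a (fun s Hs => proj1 (S_balanced Hs)) Hm).
    rewrite geval_cons, geval_app, geval_cons, app_nil_r, geval_letter_rename_flip.
    rewrite !link_app_balanced, Hk, link_winv_rename_swap by assumption.
    exists (link a b (geval_letter (s, e)) + k). lia.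
Qed.

End SwapSymmetricWords.

End ExponentSums.

Definition atoms : nominal.
Proof.
  refine (@Nominal nat (fun p a => fwd p a) _ _ _).
  - intros p a Hp. apply Hp.
  - intros p q r a Hr. apply Hr.
  - intros a. exists [a]. intros p Hp. apply Hp. left. reflexivity.
Defined.

Definition swap_perm (a b : nat) : finperm.
Proof.
  refine (@FinPerm (swap Nat.eq_dec a b) (swap Nat.eq_dec a b)
            (swap_involutive Nat.eq_dec a b) (swap_involutive Nat.eq_dec a b) _).
  exists [a; b]. intros z Hz. unfold swap.
  destruct (Nat.eq_dec z a), (Nat.eq_dec z b); subst; simpl in Hz; tauto.
Defined.

Lemma swap_perm_fixes {a b l} : ~ In a l -> ~ In b l -> fixes (swap_perm a b) l.
Proof.
  intros Ha Hb z Hz. cbn [fwd swap_perm]. unfold swap.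
  destruct (Nat.eq_dec z a), (Nat.eq_dec z b); subst; tauto.
Qed.

Lemma exists_fresh_pair (l : list nat) : exists a b, a <> b /\ ~ In a l /\ ~ In b l.
Proof.
  assert (Hfresh : forall a, (list_max l < a)%nat -> ~ In a l).
  { intros a Ha Hin. pose proof (proj1 (list_max_le l _) (le_n _)) as Hmax.
    rewrite Forall_forall in Hmax. specialize (Hmax a Hin). lia. }
  exists (S (list_max l)), (S (S (list_max l))). repeat split; try apply Hfresh; lia.
Qed.

Lemma supported_set_rename {P : word atoms -> Prop} {l p w} :
  (forall q, fixes q l -> forall w, set_act atoms q P w <-> P w) ->
  fixes p l -> P w -> P (rename (fwd p) w).
Proof.
  intros HP Hp Hw. apply (HP (finperm_inv p)); [|exact Hw].
  intros a Ha. cbn [fwd finperm_inv]. rewrite <- (Hp a Ha) at 1. apply bwd_fwd.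
Qed.

Definition abel_kernel (w : word atoms) : Prop :=
  reduced w /\ forall a, exp_sum Nat.eq_dec a w = 0.

Lemma abel_kernel_subgroup : is_subgroup abel_kernel.
Proof.
  split; [|split; [|split]].
  - intros w [Hw _]. exact Hw.
  - split; [apply reduced_nil | reflexivity].
  - intros u v w [_ Hu] [_ Hv] Hw Huvw. split; [exact Hw|]. intros a.
    rewrite <- (exp_sum_fequiv _ a Huvw), exp_sum_app, Hu, Hv. reflexivity.
  - intros u [Hu Hexp]. split; [exact (reduced_winv Hu)|]. intros a.
    rewrite exp_sum_winv, Hexp. reflexivity.
Qed.

Lemma abel_kernel_fin_supported : fin_supported_set atoms abel_kernel.
Proof.
  exists []. intros p _ w. unfold set_act, abel_kernel.
  change (word_act atoms (finperm_inv p) w) with (rename (bwd p) w).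
  assert (Hinj : Injective (bwd p)).
  { intros x y Hxy. rewrite <- (fwd_bwd p x), Hxy. apply fwd_bwd. }
  split; intros [Hred Hexp]; split.
  - exact (reduced_rename_inv (bwd p) Hred).
  - intros a. rewrite <- (exp_sum_rename _ a w Hinj). apply Hexp.
  - exact (reduced_rename Hinj Hred).
  - intros a. rewrite <- (bwd_fwd p a), (exp_sum_rename _ _ w Hinj). apply Hexp.
Qed.

Lemma abel_kernel_commutator a b : a <> b -> abel_kernel (commutator a b).
Proof.
  intros Hab. split; [exact (reduced_commutator Hab)|]. intros x. apply exp_sum_commutator.
Qed.

Theorem theorem6p3 : ~ internal_nielsen_schreier.
Proof.
  intros nielsen_schreier.
  destruct (nielsen_schreier atoms abel_kernel abel_kernel_fin_supported abel_kernel_subgroup)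
    as (B & [l Hl] & HB & Hfree).
  destruct (exists_fresh_pair l) as (a & b & Hab & Ha & Hb).
  set (tau := swap Nat.eq_dec a b).
  assert (HBbal : forall s, B s -> exp_sum Nat.eq_dec a s = 0 /\ exp_sum Nat.eq_dec b s = 0)
    by (intros s Hs; split; apply (HB s Hs)).
  assert (HBtau : forall s, B s -> B (rename tau s))
    by (intros s; exact (supported_set_rename Hl (swap_perm_fixes Ha Hb))).
  destruct (proj1 (proj2 Hfree) _ (abel_kernel_commutator Hab)) as (ws & Hws & Hred & Hval).
  assert (Hsym : rename (rename tau) ws = winv ws).
  { apply (free_basis_word_rename_winv (swap_injective _ a b) Hfree HBtau Hws Hred Hval).
    rewrite rename_commutator, winv_commutator. unfold tau. rewrite swap_l, swap_r.
    apply rst_refl. }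
  destruct (link_even_of_swap_symmetric _ Hab HBbal Hws Hsym) as [k Hk].
  rewrite (link_fequiv _ Hab Hval), link_commutator in Hk by exact Hab.
  lia.
Qed.
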